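(* Let $\phi=(\phi_i)_{i\ge1}$ and $\psi=(\psi_i)_{i\ge1}$ be sequences of real numbers with $\psi_i>-2$ for all $i\ge1$. Define polynomials $\mathcal{H}_n^{\phi,\psi}$ by $\mathcal{H}_0^{\phi,\psi}=1$ and, for $n\ge0$, $$\mathcal{H}_{n+1}^{\phi,\psi}(x)=2x\mathcal{H}_n^{\phi,\psi}(x)-(\mathcal{H}_n^{\phi,\psi})'(x)+(\phi_{n+1}+x\psi_{n+1})\mathcal{H}_n^{\phi,\psi}(x).$$ Then for every $n\ge0$ the polynomial $\mathcal{H}_n^{\phi,\psi}$ has only real and simple zeros, and the zeros of $\mathcal{H}_{n+1}^{\phi,\psi}$ interlace the zeros of $\mathcal{H}_n^{\phi,\psi}$.
   Context: $\mathcal{H}_n^{\phi,\psi}$ has degree $n$ and leading coefficient $\prod_{i=1}^n(\psi_i+2)$. Interlacing: given two finite sets $U,V$ of real numbers, $U$ (strictly) interlaces $V$ if $\min U<\min V$ and between any two consecutive elements of either of the two sets there is an element of the other; ''the zeros of $p$ interlace the zeros of $q$'' means the corresponding sets of zeros satisfy this. *)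

From HB Require Import structures.
From mathcomp Require Import all_boot all_order all_algebra.
From mathcomp Require Import reals.
Set Implicit Arguments. Unset Strict Implicit. Unset Printing Implicit Defensive.
Import Order.TTheory GRing.Theory Num.Theory.
Local Open Scope ring_scope.

(* The polynomials H_n^{phi,psi}; the sequences phi, psi are 1-indexed
   (index 0 is unused): H_0 = 1,
   H_{n+1} = 2x H_n - H_n' + (phi_{n+1} + x psi_{n+1}) H_n. *)
Fixpoint Hpoly (R : realType) (phi psi : nat -> R) (n : nat) : {poly R} :=
  match n with
  | 0 => 1
  | m.+1 =>
      let h := Hpoly phi psi m in
      ('X *+ 2) * h - h^`() + ((phi n)%:P + (psi n) *: 'X) * h
  end.

Definition real_simple_zeros (R : realType) (p : {poly R}) (s : seq R) : Prop :=
  p != 0 /\ uniq s /\ p = lead_coef p *: \prod_(x <- s) ('X - x%:P).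

(* U (strictly) interlaces V (finite sets of reals given as lists):
   min U < min V, and between any two consecutive elements of either
   set there is an element of the other. *)
Definition consecutive (R : realType) (U : seq R) (a b : R) : Prop :=
  a \in U /\ b \in U /\ a < b /\ (forall c, c \in U -> ~ (a < c /\ c < b)).

Definition interlaces (R : realType) (U V : seq R) : Prop :=
  (exists2 u, u \in U & forall v, v \in V -> u < v) /\
  (forall a b, consecutive U a b -> exists2 v, v \in V & a < v /\ v < b) /\
  (forall a b, consecutive V a b -> exists2 u, u \in U & a < u /\ u < b).

(* At a zero x of H_n the recurrence reduces to H_{n+1}(x) = - H_n'(x).  If the
   zeros s_0 < ... < s_{n-1} of H_n are real and simple, H_n' alternates in sign
   along them, and so does H_{n+1}.  Since psi_{n+1} > -2, H_{n+1} has degree n+1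
   and a positive leading coefficient, which fixes its signs at -oo and +oo.  The
   intermediate value theorem then gives a zero of H_{n+1} in each of the n+1
   gaps of -oo < s_0 < ... < s_{n-1} < +oo; these are all its zeros, so they are
   real, simple and interlace the s_i, which carries the induction to n+1. *)

From HB Require Import structures.
From mathcomp Require Import all_boot all_order all_algebra.
From mathcomp Require Import reals polyrcf ring lra.
Set Implicit Arguments. Unset Strict Implicit. Unset Printing Implicit Defensive.
Import Order.TTheory GRing.Theory Num.Theory.
Local Open Scope ring_scope.

Section SignFacts.
Variable R : realDomainType.
Implicit Types (x y : R) (l : seq R).

Lemma mulr_lt0_sign n x y :
  0 < (-1) ^+ n * y -> (x * y < 0) = (0 < (-1) ^+ n.+1 * x).
Proof.
move=> y_sign; rewrite -(pmulr_lgt0 _ y_sign) exprS mulN1r !mulNr mulrACA.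
have -> : (-1) ^+ n * (-1) ^+ n = 1 :> R by rewrite -exprD -signr_odd oddD addbb.
by rewrite mul1r oppr_gt0.
Qed.

Lemma prod_subr_gt0 x l : {in l, forall y, y < x} -> 0 < \prod_(y <- l) (x - y).
Proof. by move=> lt_x; rewrite big_seq prodr_gt0 // => y /lt_x; rewrite subr_gt0. Qed.

Lemma signr_prod_subr_gt0 x l :
  {in l, forall y, x < y} -> 0 < (-1) ^+ size l * \prod_(y <- l) (x - y).
Proof.
elim: l => [|y l IHl] gt_x; first by rewrite big_nil mulr1.
rewrite big_cons exprS mulrACA mulN1r opprB mulr_gt0 //.
  by rewrite subr_gt0 gt_x ?mem_head.
by apply: IHl => z zl; rewrite gt_x // in_cons zl orbT.
Qed.

End SignFacts.

Lemma horner_prod_XsubC (R : comNzRingType) (l : seq R) (x : R) :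
  (\prod_(y <- l) ('X - y%:P)).[x] = \prod_(y <- l) (x - y).
Proof. by rewrite horner_prod; under eq_bigr do rewrite hornerXsubC. Qed.

Lemma deriv_XsubC_mul_root (R : comNzRingType) (x : R) (p : {poly R}) :
  (('X - x%:P) * p)^`().[x] = p.[x].
Proof. by rewrite derivM derivXsubC mul1r hornerD hornerM hornerXsubC subrr mul0r addr0. Qed.

Lemma deriv_sorted_root_sign (R : realDomainType) (c : R) (s : seq R) k :
    0 < c -> sorted <%R s -> (k < size s)%N ->
  0 < (-1) ^+ (size s - k.+1) * (c *: \prod_(y <- s) ('X - y%:P))^`().[s`_k].
Proof.
move=> c_gt0 s_sorted ks; set x := s`_k.
have s_split : s = take k s ++ x :: drop k.+1 s by rewrite -drop_nth // cat_take_drop.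
have := s_sorted; rewrite (sorted_pairwise lt_trans) {1}s_split pairwise_cat.
rewrite pairwise_cons => /and4P[/allrelP lt_take _ /allP gt_drop _].
rewrite [in X in c *: X]s_split big_cat big_cons /= mulrCA derivZ hornerZ.
rewrite deriv_XsubC_mul_root hornerM !horner_prod_XsubC.
rewrite -size_drop mulrCA (pmulr_rgt0 _ c_gt0) mulrCA; apply: mulr_gt0.
  by apply: prod_subr_gt0 => y yt; apply: lt_take; rewrite ?mem_head.
exact: signr_prod_subr_gt0.
Qed.

Section RealClosedRoots.
Variable R : rcfType.
Implicit Types (q : {poly R}) (s b : seq R).

Lemma poly_pinfty_gt0 q : 0 < lead_coef q -> exists M, forall x, M <= x -> 0 < q.[x].
Proof.
move=> lcq; have [M leM] := poly_pinfty_gt_lc lcq.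
by exists M => x /leM; apply: lt_le_trans.
Qed.

Lemma poly_minfty_sign q :
  0 < lead_coef q -> exists M, forall x, x <= M -> 0 < (-1) ^+ (size q).-1 * q.[x].
Proof.
move=> lcq; set e := (-1) ^+ (size q).-1.
have : 0 < lead_coef (e *: (q \Po - 'X)).
  rewrite lead_coefZ lead_coef_comp ?size_polyN ?size_polyX // lead_coefN lead_coefX.
  by rewrite (mulrC (lead_coef q)) signrMK.
move=> /poly_pinfty_gt0[M leM]; exists (- M) => x xM.
by have := leM (- x); rewrite lerNr hornerZ horner_comp hornerN hornerX opprK; apply.
Qed.

Lemma poly_signs_beyond q s : sorted <%R s -> 0 < lead_coef q -> exists a z,
  [/\ sorted <%R (a :: s ++ [:: z]), 0 < (-1) ^+ (size q).-1 * q.[a] & 0 < q.[z]].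
Proof.
move=> s_sorted lcq.
have [Ma geMa] := poly_minfty_sign lcq; have [Mz leMz] := poly_pinfty_gt0 lcq.
pose B := \big[Order.max/0]_(y <- s) `|y|.
have B_ge0 : 0 <= B by apply: bigmax_ge_id.
have s_bound y : y \in s -> - B <= y <= B.
  by move=> ys; rewrite -ler_norml; apply: le_bigmax_seq ys _.
pose a := Num.min Ma (- B - 1); pose z := Num.max Mz (B + 1).
have a_lt y : - B <= y -> a < y.
  by move=> By; rewrite gt_min; apply/orP; right; lra.
have lt_z y : y <= B -> y < z.
  by move=> yB; rewrite lt_max; apply/orP; right; lra.
exists a, z; split; last 2 first.
- by apply: geMa; rewrite ge_min lexx.
- by apply: leMz; rewrite le_max lexx.
rewrite /= (path_sortedE lt_trans) all_cat /= (sorted_pairwise lt_trans).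
rewrite pairwise_cat allrel1r /= andbT -(sorted_pairwise lt_trans) s_sorted.
apply/and4P; split => //; last by apply/allP => y /s_bound /andP[_ /lt_z].
apply/andP; split; first by apply/allP => y /s_bound /andP[/a_lt].
by apply: a_lt; rewrite le_max; apply/orP; right; lra.
Qed.

Lemma poly_split_sign_changes q b :
    sorted <%R b -> size q = size b ->
    (forall j, (j.+1 < size b)%N -> q.[b`_j] * q.[b`_j.+1] < 0) ->
  exists t, [/\ sorted <%R t, size t = (size b).-1,
    q = lead_coef q *: \prod_(x <- t) ('X - x%:P)
    & forall j, (j < size t)%N -> b`_j < t`_j < b`_j.+1].
Proof.
move=> b_sorted szq sign_change.
have root_in j : {x | (j.+1 < size b)%N -> (b`_j < x < b`_j.+1) && root q x}.
  have [jb|] := ltnP j.+1 (size b); last by exists 0.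
  have lt_b : b`_j < b`_j.+1 by rewrite (lt_sorted_ltn_nth 0 b_sorted) // inE ltnW.
  have [x] := poly_ivtoo (ltW lt_b) (sign_change j jb).
  by rewrite in_itv /= => xb rx; exists x => _; rewrite xb rx.
pose t := mkseq (fun j => sval (root_in j)) (size b).-1.
have szt : size t = (size b).-1 by rewrite size_mkseq.
have t_in j : (j < size t)%N -> (b`_j < t`_j < b`_j.+1) && root q t`_j.
  by rewrite szt ltn_predRL => jb; rewrite nth_mkseq ?ltn_predRL // (svalP (root_in j)).
have t_sorted : sorted <%R t.
  apply/(sortedP 0) => j jt.
  have /andP[/andP[_ lt_b] _] := t_in j (ltnW jt).
  by have /andP[/andP[b_lt _] _] := t_in j.+1 jt; apply: lt_trans b_lt.
exists t; split => // [|j /t_in /andP[] //].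
have [-> | q_neq0] := eqVneq q 0; first by rewrite lead_coef0 scale0r.
apply: all_roots_prod_XsubC.
- by rewrite szt prednK // -szq size_poly_gt0.
- by apply/(all_nthP 0) => j /t_in /andP[].
- by rewrite uniq_rootsE (sorted_uniq lt_trans ltxx).
Qed.

Lemma interlacing_roots (c : R) s q :
    0 < c -> sorted <%R s -> size q = (size s).+2 -> 0 < lead_coef q ->
    {in s, forall x, q.[x] * (c *: \prod_(y <- s) ('X - y%:P))^`().[x] < 0} ->
  exists t, [/\ sorted <%R t, size t = (size s).+1,
    q = lead_coef q *: \prod_(x <- t) ('X - x%:P)
    & forall i, (i < size s)%N -> t`_i < s`_i < t`_i.+1].
Proof.
move=> c_gt0 s_sorted szq lcq q_sign; set n := size s.
have q_at_root k : (k < n)%N -> 0 < (-1) ^+ (n - k) * q.[s`_k].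
  move=> kn; rewrite -(subnSK kn).
  by rewrite -(mulr_lt0_sign _ (deriv_sorted_root_sign c_gt0 s_sorted kn)) q_sign ?mem_nth.
have [a [z [b_sorted qa qz]]] := poly_signs_beyond s_sorted lcq.
set b := a :: s ++ [:: z] in b_sorted.
have szb : size b = n.+2 by rewrite /= size_cat addn1.
have b_nth i : (i < n)%N -> b`_i.+1 = s`_i by move=> i_n; rewrite /= nth_cat i_n.
have b_sign j : (j < n.+2)%N -> 0 < (-1) ^+ (n.+1 - j) * q.[b`_j].
  case: j => [_|j]; first by rewrite subn0; move: qa; rewrite szq.
  rewrite ltnS leq_eqVlt => /orP[/eqP-> | j_n].
    by rewrite subnn expr0 mul1r /= nth_cat ltnn subnn.
  by rewrite b_nth // subSS; apply: q_at_root.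
have b_sign_change j : (j.+1 < size b)%N -> q.[b`_j] * q.[b`_j.+1] < 0.
  rewrite szb ltnS => jb.
  by rewrite (mulr_lt0_sign _ (b_sign j.+1 jb)) (subnSK jb) b_sign // ltnW.
have szqb : size q = size b by rewrite szq szb.
have [t [t_sorted szt qt bt]] := poly_split_sign_changes b_sorted szqb b_sign_change.
exists t; rewrite szt szb; split => // i i_n.
have i1t : (i.+1 < size t)%N by rewrite szt szb.
have /andP[_ lt_b] := bt i (ltnW i1t); have /andP[b_lt _] := bt i.+1 i1t.
by rewrite -b_nth // lt_b b_lt.
Qed.

End RealClosedRoots.

Lemma interlaces_nth (R : realType) (s t : seq R) :
    sorted <%R s -> sorted <%R t -> size t = (size s).+1 ->
    (forall i, (i < size s)%N -> t`_i < s`_i < t`_i.+1) ->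
  interlaces t s.
Proof.
move=> s_sorted t_sorted szt st.
have ltn_index (U : seq R) i j : sorted <%R U -> (i < size U)%N -> (j < size U)%N ->
    U`_i < U`_j -> (i < j)%N.
  by move=> U_sorted iU jU; rewrite (lt_sorted_ltn_nth 0 U_sorted).
have le_nth (U : seq R) i j : sorted <%R U -> (i <= j)%N -> (j < size U)%N ->
    U`_i <= U`_j.
  by move=> U_sorted ij jU; rewrite (lt_sorted_leq_nth 0 U_sorted) // inE (leq_ltn_trans ij).
split; [|split].
- exists t`_0; first by rewrite mem_nth // szt.
  move=> _ /(nthP 0)[j js <-].
  have /andP[t0_lt _] := st 0%N (leq_ltn_trans (leq0n j) js).
  exact: lt_le_trans t0_lt (le_nth _ _ _ s_sorted (leq0n j) js).
- move=> _ _ [/(nthP 0)[i it <-] [/(nthP 0)[j jt <-] [tij _]]].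
  have ij := ltn_index _ _ _ t_sorted it jt tij.
  have i_s : (i < size s)%N by rewrite -ltnS -szt (leq_ltn_trans ij jt).
  have /andP[ti_lt lt_ti1] := st i i_s.
  exists s`_i; first exact: mem_nth.
  by rewrite ti_lt (lt_le_trans lt_ti1) // le_nth.
- move=> _ _ [/(nthP 0)[i i_s <-] [/(nthP 0)[j js <-] [sij _]]].
  have ij := ltn_index _ _ _ s_sorted i_s js sij.
  have i1s : (i.+1 < size s)%N by apply: leq_ltn_trans ij js.
  have /andP[_ lt_ti1] := st i i_s; have /andP[ti1_lt _] := st i.+1 i1s.
  exists t`_i.+1; first by rewrite mem_nth // szt.
  by rewrite lt_ti1 (lt_le_trans ti1_lt) // le_nth.
Qed.

Lemma sorted_real_simple_zeros (R : realType) (p : {poly R}) (s : seq R) :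
    p != 0 -> sorted <%R s -> p = lead_coef p *: \prod_(x <- s) ('X - x%:P) ->
  real_simple_zeros p s.
Proof. by move=> p_neq0 /(sorted_uniq lt_trans ltxx). Qed.

Section Hpoly.
Variable R : realType.
Variables phi psi : nat -> R.
Hypothesis psi_gt : forall i : nat, (1 <= i)%N -> -2 < psi i.
Local Notation H := (Hpoly phi psi).

Lemma HpolyS n :
  H n.+1 = (2 + psi n.+1) *: ('X * H n) + ((phi n.+1)%:P * H n - (H n)^`()).
Proof.
rewrite /= -!mul_polyC polyCD polyC_natr.
by move: ((H n)^`()) (H n) (phi n.+1)%:P (psi n.+1)%:P => d h a b; ring.
Qed.

Lemma size_lead_coef_Hpoly n : size (H n) = n.+1 /\ 0 < lead_coef (H n).
Proof.
elim: n => [|n [szH lcH]]; first by rewrite /= size_poly1 lead_coef1.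
have a_gt0 : 0 < 2 + psi n.+1 by have := psi_gt (ltn0Sn n); lra.
have H_neq0 : H n != 0 by rewrite -size_poly_gt0 szH.
have sz_lead : size ((2 + psi n.+1) *: ('X * H n)) = n.+2.
  by rewrite size_scale ?gt_eqF // mulrC size_mulX // szH.
have sz_low : (size ((phi n.+1)%:P * H n - (H n)^`())%R < n.+2)%N.
  apply: leq_ltn_trans (size_polyD _ _) _; rewrite gtn_max size_polyN.
  rewrite (leq_ltn_trans (size_polyMleq _ _)) /=; last first.
    by rewrite size_polyC szH; case: (_ != 0).
  by rewrite (leq_trans (lt_size_deriv H_neq0)) // szH.
rewrite HpolyS size_polyDl ?sz_lead // lead_coefDl ?sz_lead //.
by rewrite lead_coefZ (mulrC 'X) lead_coefMX mulr_gt0.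
Qed.

Lemma horner_HpolyS_root n x : root (H n) x -> (H n.+1).[x] = - (H n)^`().[x].
Proof. by move=> /rootP Hx; rewrite /= !hornerE Hx !mulr0 add0r addr0. Qed.

Lemma Hpoly_interlacing_step n s :
    sorted <%R s -> H n = lead_coef (H n) *: \prod_(x <- s) ('X - x%:P) ->
  exists t, [/\ sorted <%R t, size t = (size s).+1,
    H n.+1 = lead_coef (H n.+1) *: \prod_(x <- t) ('X - x%:P)
    & forall i, (i < size s)%N -> t`_i < s`_i < t`_i.+1].
Proof.
move=> s_sorted Hs; have [szH lcH] := size_lead_coef_Hpoly n.
have [szH1 lcH1] := size_lead_coef_Hpoly n.+1.
have szs : size s = n.
  by apply/eq_add_S; rewrite -szH Hs size_scale ?gt_eqF // size_prod_XsubC.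
apply: (interlacing_roots lcH s_sorted _ lcH1); first by rewrite szH1 szs.
move=> _ /(nthP 0)[k ks <-]; rewrite -Hs horner_HpolyS_root; last first.
  by rewrite Hs rootZ ?gt_eqF // (root_prod_XsubC s) mem_nth.
have := deriv_sorted_root_sign lcH s_sorted ks; rewrite -Hs => H'_sign.
by rewrite (mulr_lt0_sign _ H'_sign) exprS mulN1r mulrNN.
Qed.

Lemma Hpoly_sorted_roots n :
  exists s, sorted <%R s /\ H n = lead_coef (H n) *: \prod_(x <- s) ('X - x%:P).
Proof.
elim: n => [|n [s [s_sorted Hs]]].
  by exists [::]; rewrite /= big_nil lead_coef1 scale1r.
by have [t [t_sorted _ Ht _]] := Hpoly_interlacing_step s_sorted Hs; exists t.
Qed.

End Hpoly.

Unset Implicit Arguments.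

Theorem theorem3p3 (R : realType) (phi psi : nat -> R)
    (hpsi : forall i : nat, (1 <= i)%N -> -2 < psi i) (n : nat) :
  exists (s t : seq R),
    [/\ real_simple_zeros (Hpoly phi psi n) s,
        real_simple_zeros (Hpoly phi psi n.+1) t &
        interlaces t s].
Proof.
have H_neq0 m : Hpoly phi psi m != 0.
  by rewrite -size_poly_gt0 (size_lead_coef_Hpoly phi hpsi m).1.
have [s [s_sorted Hs]] := Hpoly_sorted_roots phi hpsi n.
have [t [t_sorted szt Ht st]] := Hpoly_interlacing_step hpsi s_sorted Hs.
exists s, t; split; [exact: sorted_real_simple_zeros | exact: sorted_real_simple_zeros |].
exact: interlaces_nth.
Qed.
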